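(* Let $X$ be an extremally disconnected topological space satisfying $S_{fin}(s\mathcal{O},s\mathcal{O})$ (i.e. $X$ is semi-Menger). Then Alice (the first player) does not have a winning strategy in the game $G_{fin}(s\mathcal{O},s\mathcal{O})$ played on $X$.
   Context: A subset $A$ of a topological space $X$ is semi-open if $A\subseteq \mathrm{Cl}(\mathrm{Int}(A))$. A semi-open cover of $X$ is a cover of $X$ by semi-open sets; $s\mathcal{O}$ denotes the collection of all semi-open covers of $X$. A space is extremally disconnected if the closure of every open set is open. $X$ satisfies $S_{fin}(s\mathcal{O},s\mathcal{O})$ (is semi-Menger) if for each sequence $\langle\mathcal{U}_n:n\in\omega\rangle$ of semi-open covers of $X$ there is a sequence $\langle\mathcal{V}_n:n\in\omega\rangle$ such that each $\mathcal{V}_n$ is a finite subset of $\mathcal{U}_n$ and $\bigcup_{n}\mathcal{V}_n$ covers $X$. The game $G_{fin}(s\mathcal{O},s\mathcal{O})$ is played by Alice and Bob in innings $n\in\omega$: in inning $n$ Alice chooses a semi-open cover $\mathcal{U}_n$ of $X$ and Bob chooses a finite subset $\mathcal{V}_n\subseteq\mathcal{U}_n$. Bob wins the play if $\bigcup_n\bigcup\mathcal{V}_n=X$; otherwise Alice wins. A strategy for Alice is a rule assigning to each finite sequence of Bob's previous moves a semi-open cover of $X$; it is winning if Alice wins every play in which she follows it. *)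

From mathcomp Require Import all_boot all_classical all_reals all_analysis.
Set Implicit Arguments. Unset Strict Implicit. Unset Printing Implicit Defensive.
Local Open Scope classical_set_scope.

Definition semi_open {X : topologicalType} (A : set X) : Prop :=
  A `<=` closure (interior A).

Definition semi_open_cover {X : topologicalType} (U : set (set X)) : Prop :=
  (forall A, U A -> semi_open A) /\ \bigcup_(A in U) A = [set: X].

Definition extremally_disconnected (X : topologicalType) : Prop :=
  forall A : set X, open A -> open (closure A).

(* S_fin(sO, sO): finite subsets are represented by finite sequences. *)
Definition semi_Menger (X : topologicalType) : Prop :=
  forall U : nat -> set (set X), (forall n, semi_open_cover (U n)) ->
  exists V : nat -> seq (set X),
    (forall n A, A \in V n -> U n A) /\
    \bigcup_n (\bigcup_(A in [set B | B \in V n]) A) = [set: X].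

(* A strategy for Alice: to each finite sequence of Bob's previous moves
   (finite families of sets) she assigns a semi-open cover. *)
Definition alice_strategy (X : topologicalType) :=
  seq (seq (set X)) -> set (set X).

Definition is_alice_strategy {X : topologicalType} (sigma : alice_strategy X)
  : Prop := forall h, semi_open_cover (sigma h).

Definition follows {X : topologicalType} (sigma : alice_strategy X)
  (V : nat -> seq (set X)) : Prop :=
  forall n A, A \in V n -> sigma (mkseq V n) A.

Definition bob_wins {X : topologicalType} (V : nat -> seq (set X)) : Prop :=
  \bigcup_n (\bigcup_(A in [set B | B \in V n]) A) = [set: X].

Definition alice_winning_strategy {X : topologicalType}
  (sigma : alice_strategy X) : Prop :=
  is_alice_strategy sigma /\ forall V, follows sigma V -> ~ bob_wins V.

From mathcomp Require Import all_boot all_classical all_reals all_analysis.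
Local Open Scope classical_set_scope.

(* For every history h of Bob's moves, the semi-Menger property applied
   to the constant sequence sigma h yields finite selections L h n whose
   union covers X; Bob may answer with any finite block L h 0 ++ ... ++ L h k,
   covering W h k; since W h k increases with k, Bob only has to choose the
   height k.  We fold the game tree into sets G d h k: if x is in G d h k and
   Bob's next d answers from h all miss x, then his answer of height k
   afterwards covers x.  These sets cover X as k grows and are semi-open,
   because in an extremally disconnected space semi-open sets are closed under
   finite intersections.
   One more application of the semi-Menger property to the increasing covers
   (G n [::] k)_k picks heights b n; Bob answering with height b n at inning n
   then covers X, so sigma is not winning. *)

Section SemiOpenSets.
Variable X : topologicalType.

Lemma open_closure_meet (O H : set X) :
  open O -> O `&` closure H `<=` closure (O `&` H).
Proof.
move=> oO x [Ox cHx] B Bx.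
have nO : nbhs x O by apply: open_nbhs_nbhs.
have [y [Hy [By Oy]]] := cHx _ (filterI Bx nO).
by exists y.
Qed.

Lemma semi_openT : semi_open [set: X].
Proof. by rewrite /semi_open interiorT; exact: subset_closure. Qed.

Lemma semi_open_bigcup (I : Type) (D : set I) (F : I -> set X) :
  (forall i, D i -> semi_open (F i)) -> semi_open (\bigcup_(i in D) F i).
Proof.
move=> soF x [i Di Fx]; apply: (closureS (A := (F i)°)); last exact: soF.
by apply: interiorS => y Fy; exists i.
Qed.

Hypothesis ED : extremally_disconnected X.

Lemma ext_disconnected_closureI (G H : set X) :
  open G -> open H -> closure G `&` closure H `<=` closure (G `&` H).
Proof.
move=> oG oH x [cGx cHx].
have cl_meet : closure G `&` closure H `<=` closure (closure G `&` H).
  by apply: open_closure_meet; exact: ED.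
have meet_cl : closure G `&` H `<=` closure (G `&` H).
  by move=> y [cGy Hy]; rewrite setIC; exact: open_closure_meet.
rewrite [closure (G `&` H)](closure_id _).1; last exact: closed_closure.
exact: closureS meet_cl _ (cl_meet _ (conj cGx cHx)).
Qed.

Lemma semi_openI (A B : set X) :
  semi_open A -> semi_open B -> semi_open (A `&` B).
Proof.
move=> soA soB x [Ax Bx]; rewrite interiorI.
by apply: ext_disconnected_closureI; [exact: open_interior|exact: open_interior|split; auto].
Qed.

Lemma semi_open_bigcap_ord (c : nat) (f : nat -> set X) :
  (forall j, (j < c)%N -> semi_open (f j)) -> semi_open (\bigcap_(j < c) f j).
Proof.
move=> sof; rewrite bigcap_mkord.
apply: (big_ind semi_open semi_openT semi_openI) => j _; exact: sof.
Qed.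

End SemiOpenSets.

Lemma eventually_in_seq (I : eqType) (P : I -> nat -> Prop) (s : seq I) :
  (forall i k k', (k <= k')%N -> P i k -> P i k') ->
  (forall i, i \in s -> exists k, P i k) ->
  exists K, forall i, i \in s -> P i K.
Proof.
move=> monoP; elim: s => [|i s IH] evP; first by exists 0%N.
have [K HK] := IH (fun j js => evP j (mem_behead (s := i :: s) js)).
have [k Hk] := evP i (mem_head _ _).
exists (maxn K k) => j; rewrite in_cons => /orP[/eqP ->|js].
- exact: monoP (leq_maxr _ _) Hk.
- exact: monoP (leq_maxl _ _) (HK _ js).
Qed.

Definition accum {T : Type} (s : nat -> seq T) (k : nat) : seq T :=
  flatten (mkseq s k.+1).

Lemma mem_accum (T : eqType) (s : nat -> seq T) k a :
  reflect (exists2 n, (n <= k)%N & a \in s n) (a \in accum s k).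
Proof.
apply: (iffP flattenP) => [[t /mapP[n]]|[n nk an]].
- by rewrite mem_iota => /andP[_ nk] -> an; exists n.
- by exists (s n) => //; apply: map_f; rewrite mem_iota.
Qed.

Definition seq_union {X : Type} (s : seq (set X)) : set X :=
  \bigcup_(A in [set B | B \in s]) A.

Lemma strategy_selections {X : topologicalType} {sigma : alice_strategy X} :
  semi_Menger X -> is_alice_strategy sigma ->
  exists L : seq (seq (set X)) -> nat -> seq (set X),
    (forall h n A, A \in L h n -> sigma h A) /\
    (forall h, \bigcup_n seq_union (L h n) = [set: X]).
Proof.
move=> SM sig.
have /choice[L HL] : forall h, exists V : nat -> seq (set X),
    (forall n A, A \in V n -> sigma h A) /\
    \bigcup_n seq_union (V n) = [set: X] by move=> h; apply: SM.
by exists L; split=> [h|h]; have [] := HL h.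
Qed.

Section DefeatingAStrategy.
Variables (X : topologicalType) (sigma : alice_strategy X).
Variable L : seq (seq (set X)) -> nat -> seq (set X).
Hypothesis L_sel : forall h n A, A \in L h n -> sigma h A.
Hypothesis L_cov : forall h, \bigcup_n seq_union (L h n) = [set: X].

Definition W (h : seq (seq (set X))) (k : nat) : set X :=
  seq_union (accum (L h) k).

Fixpoint G (d : nat) (h : seq (seq (set X))) (k : nat) : set X :=
  match d with
  | 0 => W h k
  | d'.+1 => \bigcup_(c in [set: nat])
      (W h c `&` \bigcap_(j < c) G d' (rcons h (accum (L h) j)) k)
  end.

Lemma W_mono h k k' : (k <= k')%N -> W h k `<=` W h k'.
Proof.
move=> kk' x [A /= /mem_accum[n nk An] Ax]; exists A => //=.
by apply/mem_accum; exists n => //; exact: leq_trans kk'.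
Qed.

Lemma W_cover h x : exists k, W h k x.
Proof.
have : [set: X] x by [].
rewrite -(L_cov h) => -[n _ [A /= An Ax]].
by exists n, A => //=; apply/mem_accum; exists n.
Qed.

Lemma G_mono d h k k' : (k <= k')%N -> G d h k `<=` G d h k'.
Proof.
move=> kk'; elim: d h => [|d IH] h /=; first exact: W_mono.
move=> x [c _ [Wx Gx]]; exists c => //; split => // j /Gx.
exact: IH.
Qed.

Lemma G_cover d h x : exists k, G d h k x.
Proof.
elim: d h => [|d IH] h /=; first exact: W_cover.
have [c Wc] := W_cover h x.
have [K HK] := @eventually_in_seq _
  (fun j k => G d (rcons h (accum (L h) j)) k x) (iota 0 c)
  (fun j k k' kk' => @G_mono d _ k k' kk' x) (fun j _ => IH _).
exists K, c => //; split => // j /= jc.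
by apply: HK; rewrite mem_iota.
Qed.

Fixpoint history (b : nat -> nat) (n : nat) : seq (seq (set X)) :=
  match n with
  | 0 => [::]
  | n'.+1 => rcons (history b n') (accum (L (history b n')) (b n'))
  end.

Definition bob_move (b : nat -> nat) (n : nat) : seq (set X) :=
  accum (L (history b n)) (b n).

Lemma mkseq_history b n : mkseq (bob_move b) n = history b n.
Proof.
elim: n => [|n IH] //.
rewrite [RHS]/= /mkseq -addn1 iotaD map_cat cats1 add0n.
by rewrite -/(mkseq (bob_move b) n) IH.
Qed.

Lemma G_descends b d : forall m k x, G d (history b m) k x ->
  (forall i, (m <= i < m + d)%N -> ~ W (history b i) (b i) x) ->
  W (history b (m + d)) k x.
Proof.
elim: d => [|d IH] m k x /=; first by rewrite addn0.
move=> [c _ [Wc Gx]] missed.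
have bc : (b m < c)%N.
  rewrite ltnNge; apply/negP => cb; apply: (missed m).
    by rewrite leqnn addnS ltnS leq_addr.
  exact: W_mono cb _ Wc.
rewrite -addSnnS; apply: IH; first exact: Gx.
move=> i /andP[mi id]; apply: missed.
by rewrite -addSnnS id andbT ltnW.
Qed.

Hypothesis ED : extremally_disconnected X.
Hypothesis sig : is_alice_strategy sigma.

Lemma W_semi_open h k : semi_open (W h k).
Proof.
apply: semi_open_bigcup => A /= /mem_accum[n _ /L_sel].
exact: (sig h).1.
Qed.

Lemma G_semi_open d h k : semi_open (G d h k).
Proof.
elim: d h => [|d IH] h /=; first exact: W_semi_open.
apply: semi_open_bigcup => c _; apply: semi_openI => //.
  exact: W_semi_open.
by apply: semi_open_bigcap_ord => // j _; exact: IH.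
Qed.

Lemma G_selection : semi_Menger X ->
  exists b : nat -> nat, \bigcup_n G n [::] (b n) = [set: X].
Proof.
move=> SM.
have Gcovers n : semi_open_cover (range (G n [::])).
  split; first by move=> A [k _ <-]; exact: G_semi_open.
  apply/seteqP; split => // x _; have [k Gx] := G_cover n [::] x.
  by exists (G n [::] k) => //; exists k.
have [V [VG Vcov]] := SM _ Gcovers.
have /choice[b bV] : forall n, exists K, forall A, A \in V n -> A `<=` G n [::] K.
  move=> n; apply: eventually_in_seq => [A k k' kk' AG|A /VG[k _ <-]].
    by move=> x /AG; exact: G_mono.
  by exists k.
exists b; apply/seteqP; split => // x _.
have : [set: X] x by [].
rewrite -Vcov => -[n _ [A /= AV Ax]].
by exists n => //; exact: bV n A AV x Ax.
Qed.

Lemma alice_strategy_beaten : semi_Menger X ->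
  exists V, follows sigma V /\ bob_wins V.
Proof.
move=> SM; have [b bcov] := G_selection SM.
exists (bob_move b); split.
  by move=> n A; rewrite mkseq_history => /mem_accum[j _ /L_sel].
apply/seteqP; split => // x _; apply: contrapT => uncovered.
have missed i : ~ W (history b i) (b i) x.
  by move=> Wx; apply: uncovered; exists i.
have : [set: X] x by [].
rewrite -bcov => -[n _ Gx].
have := G_descends b n 0 (b n) x Gx (fun i _ => missed i).
by rewrite add0n; exact: missed.
Qed.

End DefeatingAStrategy.

Theorem mainTheorem1 (X : topologicalType) :
  extremally_disconnected X -> semi_Menger X ->
  ~ exists sigma : alice_strategy X, alice_winning_strategy sigma.
Proof.
move=> ED SM [sigma [sig win]].
have [L [L_sel L_cov]] := strategy_selections SM sig.
have [V [follows_V wins_V]] := @alice_strategy_beaten _ _ _ L_sel L_cov ED sig SM.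
exact: win V follows_V wins_V.
Qed.
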